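(* In the setting of the context, let $K=(K_c,K_h)$ and $r$ be formal power series as produced in the setting (so $K_c(x,y)=(x,y)+$ terms of order $\ge2$, $K_h$ has only terms of order $\ge2$, and $DK\,r=F\circ K$ formally). Let $\mathcal E(\mathbf x)=E(\mathcal C\mathbf x+L_c)$ and $\mathcal E_0=\mathcal E(0)=E(L_c)$. If the constant $$\mathscr E=\Omega_{xxx}\Omega_{yy}^3-3\Omega_{xxy}\Omega_{yy}^2\Omega_{xy}+3\Omega_{xyy}\Omega_{yy}\Omega_{xy}^2-\Omega_{yyy}\Omega_{xy}^3$$ is non-zero, then there exists a formal power series $h:\mathbb R\to\mathbb R^2$ of the form $$h(t)=\Big(\sum_{n\ge2}c_nt^n,\;t^3\Big)$$ such that $\mathcal E(K(h(t)))-\mathcal E_0=0$ as a formal power series in $t$.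
   Context: Circular restricted four body problem (CRFBP): masses $m_1+m_2+m_3=1$, $0<m_3\le m_2\le m_1$, primaries at fixed positions $(x_j,y_j)$, $j=1,2,3$, $r_j(x,y)=\sqrt{(x-x_j)^2+(y-y_j)^2}$, $\Omega(x,y)=\tfrac12(x^2+y^2)+\sum_j m_j/r_j$, vector field $f(x,\dot x,y,\dot y)=(\dot x,\,2\dot y+\Omega_x,\,\dot y,\,-2\dot x+\Omega_y)$, and Jacobi integral $E(x,\dot x,y,\dot y)=-(\dot x^2+\dot y^2)+2\Omega(x,y)$, which is conserved by $f$. Let $L_c=(x_0,0,y_0,0)$ be a critical libration point: $\Omega_x=\Omega_y=0$ and $\Omega_{xx}\Omega_{yy}=\Omega_{xy}^2$ at $(x_0,y_0)$; as in the paper's setting assume also $\Omega_{yy}\ne0$ and $\Omega_{xx}+\Omega_{yy}>4$ (all derivatives of $\Omega$ evaluated at $(x_0,y_0)$). Set $\lambda_\pm=\mp\sqrt{-4+\Omega_{xx}+\Omega_{yy}}$, $\mathbf v_0=(\Omega_{yy},0,-\Omega_{xy},0)$, $\mathbf v_1=(\Omega_{xy},\Omega_{yy},2-\Omega_{xx},-\Omega_{xy})$, $\mathbf v_\pm=(\Omega_{xy}+2\lambda_\pm,\lambda_\pm(\Omega_{xy}+2\lambda_\pm),\Omega_{yy}-4,\lambda_\pm(\Omega_{yy}-4))$, $\mathcal C$ the matrix with columns $\mathbf v_0,\mathbf v_1,\mathbf v_+,\mathbf v_-$, and $F(\mathbf x)=\mathcal C^{-1}f(\mathcal C\mathbf x+L_c)$.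 The formal series $K:\mathbb R^2\to\mathbb R^4$, $r:\mathbb R^2\to\mathbb R^2$ satisfy $DK(\mathbf y)r(\mathbf y)=F(K(\mathbf y))$ order by order, with $r(x,y)=(y,0)+$ terms of order $\ge2$. All compositions are of formal power series (with $\mathcal E$ replaced by its Taylor series at $0$). *)

From Stdlib Require Import Reals Arith Factorial.
From Coquelicot Require Import Coquelicot.
Open Scope R_scope.

(* univariate formal power series in t: coefficient of t^n *)
Definition ps := nat -> R.
(* bivariate formal power series in (x,y): coefficient of x^n y^m *)
Definition bps := nat -> nat -> R.

Definition ps_add (a b : ps) : ps := fun n => a n + b n.
Definition ps_scal (c : R) (a : ps) : ps := fun n => c * a n.
Definition ps_mul (a b : ps) : ps :=
  fun n => sum_f_R0 (fun i => a i * b (n - i)%nat) n.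
Definition ps_one : ps := fun n => if Nat.eqb n 0 then 1 else 0.
Fixpoint ps_pow (a : ps) (k : nat) : ps :=
  match k with O => ps_one | S k' => ps_mul a (ps_pow a k') end.

Definition bps_zero : bps := fun _ _ => 0.
Definition bps_add (A B : bps) : bps := fun n m => A n m + B n m.
Definition bps_scal (c : R) (A : bps) : bps := fun n m => c * A n m.
Definition bps_mul (A B : bps) : bps :=
  fun n m => sum_f_R0 (fun i => sum_f_R0 (fun j =>
                 A i j * B (n - i)%nat (m - j)%nat) m) n.
Definition bps_one : bps :=
  fun n m => if andb (Nat.eqb n 0) (Nat.eqb m 0) then 1 else 0.
Fixpoint bps_pow (A : bps) (k : nat) : bps :=
  match k with O => bps_one | S k' => bps_mul A (bps_pow A k') end.

Definition bps_dx (A : bps) : bps := fun n m => INR (S n) * A (S n) m.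
Definition bps_dy (A : bps) : bps := fun n m => INR (S m) * A n (S m).

(* Formal composition A(p(t), q(t)) of a bivariate series with two
   univariate series without constant term (p 0 = q 0 = 0): only the
   monomials of total degree <= N contribute to the coefficient of t^N. *)
Definition comp_ps (A : bps) (p q : ps) : ps := fun N =>
  sum_f_R0 (fun i => sum_f_R0 (fun j =>
     A i j * ps_mul (ps_pow p i) (ps_pow q j) N) (N - i)) N.

(* Formal composition A(P(x,y), Q(x,y)) with P, Q without constant term. *)
Definition comp_bps (A : bps) (P Q : bps) : bps := fun n m =>
  sum_f_R0 (fun i => sum_f_R0 (fun j =>
     A i j * bps_mul (bps_pow P i) (bps_pow Q j) n m) (n + m - i)) (n + m).

Definition pd (g : R -> R -> R) (i j : nat) (a b : R) : R :=
  Derive_n (fun x => Derive_n (fun y => g x y) j b) i a.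

(* Taylor series of g at (a,b), in the displacement variables (x-a, y-b) *)
Definition taylor2 (g : R -> R -> R) (a b : R) : bps :=
  fun i j => pd g i j a b / (INR (fact i) * INR (fact j)).

Definition Omega (m1 m2 m3 x1 y1 x2 y2 x3 y3 : R) (x y : R) : R :=
  / 2 * (x ^ 2 + y ^ 2)
  + m1 / sqrt ((x - x1) ^ 2 + (y - y1) ^ 2)
  + m2 / sqrt ((x - x2) ^ 2 + (y - y2) ^ 2)
  + m3 / sqrt ((x - x3) ^ 2 + (y - y3) ^ 2).

Definition dxfun (g : R -> R -> R) : R -> R -> R := fun x y => pd g 1 0 x y.
Definition dyfun (g : R -> R -> R) : R -> R -> R := fun x y => pd g 0 1 x y.

(* The 4x4 matrix C (entry C i j: row i = component (x, xdot, y, ydot),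
   column j = vector v0, v1, v+, v-), built from Oxx = Omega_xx etc. *)
Definition Cmat (Oxx Oxy Oyy : R) : nat -> nat -> R := fun i j =>
  let lp := - sqrt (-4 + Oxx + Oyy) in
  let lm := sqrt (-4 + Oxx + Oyy) in
  match j, i with
  | 0, 0 => Oyy | 0, 1 => 0 | 0, 2 => - Oxy | 0, 3 => 0
  | 1, 0 => Oxy | 1, 1 => Oyy | 1, 2 => 2 - Oxx | 1, 3 => - Oxy
  | 2, 0 => Oxy + 2 * lp | 2, 1 => lp * (Oxy + 2 * lp)
  | 2, 2 => Oyy - 4 | 2, 3 => lp * (Oyy - 4)
  | 3, 0 => Oxy + 2 * lm | 3, 1 => lm * (Oxy + 2 * lm)
  | 3, 2 => Oyy - 4 | 3, 3 => lm * (Oyy - 4)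
  | _, _ => 0
  end.

Definition mv_bps (M : nat -> nat -> R) (V : nat -> bps) : nat -> bps :=
  fun i n m => sum_f_R0 (fun j => M i j * V j n m) 3.
Definition mv_ps (M : nat -> nat -> R) (V : nat -> ps) : nat -> ps :=
  fun i n => sum_f_R0 (fun j => M i j * V j n) 3.

(* Formal f(L_c + W), where W = (W0,W1,W2,W3) are series without constant
   term (the displacement from L_c = (x0,0,y0,0)); Tx, Ty are the Taylor
   series of Omega_x, Omega_y at (x0,y0). *)
Definition f_formal (Tx Ty : bps) (W : nat -> bps) : nat -> bps := fun i =>
  match i with
  | 0 => W 1%nat
  | 1 => bps_add (bps_scal 2 (W 3%nat)) (comp_bps Tx (W 0%nat) (W 2%nat))
  | 2 => W 3%nat
  | 3 => bps_add (bps_scal (-2) (W 1%nat)) (comp_bps Ty (W 0%nat) (W 2%nat))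
  | _ => bps_zero
  end.

(* Formal E(L_c + V) - E(L_c), with E = -(xdot^2+ydot^2) + 2 Omega(x,y),
   V univariate series without constant term, TO the Taylor series of
   Omega at (x0,y0) and Om0 = Omega(x0,y0). *)
Definition energy_formal (TO : bps) (Om0 : R) (V : nat -> ps) : ps :=
  fun n =>
    - (ps_mul (V 1%nat) (V 1%nat) n + ps_mul (V 3%nat) (V 3%nat) n)
    + 2 * comp_ps TO (V 0%nat) (V 2%nat) n
    - (if Nat.eqb n 0 then 2 * Om0 else 0).

From Stdlib Require Import Reals Factorial Lia Lra.
From Coquelicot Require Import Coquelicot.
Open Scope R_scope.

(* Let [V(t) = C K(h(t), t^3)] be the displacement from [L_c], with [h(t) = c t^2 + O(t^3)].
   As [K] is the identity to first order, [V = h(t) v0 + t^3 v1 + O(t^4)]. The position part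
   [(Oyy, -Oxy)] of [v0] spans the kernel of the degenerate Hessian of [Omega], so
   [E(L_c + V) - E(L_c)] vanishes to order 5 and its [t^6] coefficient is
   [Oyy (4 - Oxx - Oyy) + Ecal c^3 / 3], which vanishes for a real cube root [c <> 0] since
   [Oxx + Oyy > 4]. At order [t^(d+6)] the coefficient [h_(d+2)] enters affinely with slope
   [c^2 Ecal <> 0] and no later coefficient of [h] enters, so [h] is determined coefficient
   by coefficient. *)

Lemma sum_f_R0_trunc (f : nat -> R) (k N : nat) :
  (k <= N)%nat -> (forall i, (k < i <= N)%nat -> f i = 0) ->
  sum_f_R0 f N = sum_f_R0 f k.
Proof.
  intros HkN Hf. induction N as [|N IH].
  - replace k with 0%nat by lia. reflexivity.
  - destruct (Nat.eq_dec k (S N)) as [->|Hk]; [reflexivity|].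
    simpl. rewrite IH, (Hf (S N)) by (lia || (intros; apply Hf; lia)). ring.
Qed.

Lemma sum_f_R0_shift (f : nat -> R) (k m : nat) :
  (forall i, (i < k)%nat -> f i = 0) ->
  sum_f_R0 f (k + m) = sum_f_R0 (fun j => f (k + j)%nat) m.
Proof.
  intros Hf. induction m as [|m IH].
  - rewrite Nat.add_0_r. destruct k as [|k]; [reflexivity|].
    simpl. rewrite sum_eq_R0 by (intros; apply Hf; lia). rewrite Nat.add_0_r. ring.
  - rewrite Nat.add_succ_r. simpl. rewrite IH, Nat.add_succ_r. reflexivity.
Qed.

Definition ps_order_ge (a : ps) (k : nat) : Prop := forall i, (i < k)%nat -> a i = 0.

Definition ps_sub (a b : ps) : ps := fun n => a n - b n.

Definition ps_monom (p q : ps) (i j : nat) : ps := ps_mul (ps_pow p i) (ps_pow q j).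

Lemma ps_add_order (a b : ps) (k : nat) :
  ps_order_ge a k -> ps_order_ge b k -> ps_order_ge (ps_add a b) k.
Proof. intros Ha Hb i Hi. unfold ps_add. rewrite Ha, Hb by exact Hi. ring. Qed.

Lemma ps_mul_ext (a a' b b' : ps) (n : nat) :
  (forall i, a i = a' i) -> (forall i, b i = b' i) -> ps_mul a b n = ps_mul a' b' n.
Proof. intros Ha Hb. unfold ps_mul. apply sum_eq. intros i _. rewrite Ha, Hb. reflexivity. Qed.

Lemma ps_mul_shift (a b : ps) (k l m : nat) :
  ps_order_ge a k -> ps_order_ge b l ->
  ps_mul a b (k + l + m)%nat = sum_f_R0 (fun i => a (k + i)%nat * b (l + m - i)%nat) m.
Proof.
  intros Ha Hb. unfold ps_mul.
  rewrite (sum_f_R0_trunc _ (k + m)) by (lia || (intros i Hi; rewrite Hb by lia; ring)).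
  rewrite sum_f_R0_shift by (intros i Hi; rewrite Ha by exact Hi; ring).
  apply sum_eq. intros i _. do 2 f_equal. lia.
Qed.

Lemma ps_mul_order (a b : ps) (k l : nat) :
  ps_order_ge a k -> ps_order_ge b l -> ps_order_ge (ps_mul a b) (k + l).
Proof.
  intros Ha Hb n Hn. apply sum_eq_R0. intros i Hi.
  destruct (Nat.lt_ge_cases i k).
  - rewrite Ha by assumption. ring.
  - rewrite Hb by lia. ring.
Qed.

Lemma ps_mul_lead (a b : ps) (k l : nat) :
  ps_order_ge a k -> ps_order_ge b l -> ps_mul a b (k + l)%nat = a k * b l.
Proof.
  intros Ha Hb. rewrite <- (Nat.add_0_r (k + l)), ps_mul_shift by assumption.
  simpl. rewrite !Nat.add_0_r, Nat.sub_0_r. reflexivity.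
Qed.

Lemma ps_mul_shift2 (a b : ps) (k l : nat) :
  ps_order_ge a k -> ps_order_ge b l ->
  ps_mul a b (k + l + 2)%nat
  = a k * b (l + 2)%nat + a (k + 1)%nat * b (l + 1)%nat + a (k + 2)%nat * b l.
Proof.
  intros Ha Hb. rewrite ps_mul_shift by assumption. simpl.
  rewrite Nat.add_0_r. do 3 f_equal; f_equal; lia.
Qed.

Lemma ps_mul_one_r (a : ps) (n : nat) : ps_mul a ps_one n = a n.
Proof.
  unfold ps_mul, ps_one. destruct n as [|n]; [simpl; ring|].
  rewrite tech5, Nat.sub_diag, sum_eq_R0; [simpl; ring|].
  intros i Hi. replace (S n - i =? 0)%nat with false by (symmetry; apply Nat.eqb_neq; lia). ring.
Qed.

Lemma ps_mul_one_l (a : ps) (n : nat) : ps_mul ps_one a n = a n.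
Proof.
  unfold ps_mul, ps_one. rewrite (sum_f_R0_trunc _ 0).
  - simpl. rewrite Nat.sub_0_r. ring.
  - lia.
  - intros i Hi. replace (i =? 0)%nat with false by (symmetry; apply Nat.eqb_neq; lia). ring.
Qed.

Lemma ps_mul_sub_l (a a' b : ps) (n : nat) :
  ps_mul (ps_sub a a') b n = ps_mul a b n - ps_mul a' b n.
Proof. unfold ps_mul, ps_sub. rewrite <- minus_sum. apply sum_eq. intros; ring. Qed.

Lemma ps_mul_sub (a b a' b' : ps) (n : nat) :
  ps_mul a b n - ps_mul a' b' n = ps_mul (ps_sub a a') b n + ps_mul a' (ps_sub b b') n.
Proof. unfold ps_mul, ps_sub. rewrite <- minus_sum, <- sum_plus. apply sum_eq. intros; ring. Qed.

Lemma ps_mul_sub_sym (a b a' b' : ps) (n : nat) :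
  2 * (ps_mul a b n - ps_mul a' b' n)
  = ps_mul (ps_sub a a') (ps_add b b') n + ps_mul (ps_add a a') (ps_sub b b') n.
Proof.
  unfold ps_mul, ps_sub, ps_add.
  rewrite <- minus_sum, <- sum_plus, scal_sum. apply sum_eq. intros; ring.
Qed.

Lemma ps_pow_order (a : ps) (u k : nat) :
  ps_order_ge a u -> ps_order_ge (ps_pow a k) (k * u).
Proof.
  intros Ha. induction k as [|k IH]; simpl.
  - intros i Hi. lia.
  - apply ps_mul_order; assumption.
Qed.

Lemma ps_pow_lead (a : ps) (u k : nat) :
  ps_order_ge a u -> ps_pow a k (k * u)%nat = a u ^ k.
Proof.
  intros Ha. induction k as [|k IH]; [reflexivity|].
  simpl. rewrite ps_mul_lead, IH by auto using ps_pow_order. reflexivity.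
Qed.

Lemma ps_pow_sub (X X' : ps) (u d : nat) :
  ps_order_ge X u -> ps_order_ge X' u -> X u = X' u -> ps_order_ge (ps_sub X X') (d + u) ->
  forall a, ps_order_ge (ps_sub (ps_pow X a) (ps_pow X' a)) (d + a * u)
    /\ ps_sub (ps_pow X a) (ps_pow X' a) (d + a * u)%nat
       = INR a * X u ^ (a - 1) * ps_sub X X' (d + u)%nat.
Proof.
  intros HX HX' Hu HD a. induction a as [|a [IHo IHc]].
  - split; [intros i _|]; unfold ps_sub; simpl; ring.
  - assert (Hsplit : forall n, ps_sub (ps_pow X (S a)) (ps_pow X' (S a)) n
       = ps_mul (ps_sub X X') (ps_pow X a) n + ps_mul X' (ps_sub (ps_pow X a) (ps_pow X' a)) n)
      by (intros n; apply ps_mul_sub).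
    split.
    + intros i Hi. rewrite Hsplit.
      rewrite (ps_mul_order _ _ (d + u) (a * u)), (ps_mul_order _ _ u (d + a * u));
        try lia; try ring; auto using ps_pow_order.
    + rewrite Hsplit.
      replace (d + S a * u)%nat with (d + u + a * u)%nat by lia.
      rewrite ps_mul_lead by auto using ps_pow_order.
      replace (d + u + a * u)%nat with (u + (d + a * u))%nat by lia.
      rewrite ps_mul_lead, IHc, ps_pow_lead, <- Hu by auto.
      destruct a as [|a]; [simpl; ring|].
      replace (S (S a) - 1)%nat with (S a) by lia. replace (S a - 1)%nat with a by lia.
      rewrite !S_INR. simpl pow. ring.
Qed.

Lemma ps_monom_order (p q : ps) (u v i j : nat) :
  ps_order_ge p u -> ps_order_ge q v -> ps_order_ge (ps_monom p q i j) (i * u + j * v).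
Proof. intros Hp Hq. apply ps_mul_order; apply ps_pow_order; assumption. Qed.

Lemma ps_monom_lead (p q : ps) (u v i j : nat) :
  ps_order_ge p u -> ps_order_ge q v -> ps_monom p q i j (i * u + j * v)%nat = p u ^ i * q v ^ j.
Proof.
  intros Hp Hq. unfold ps_monom.
  rewrite ps_mul_lead, !ps_pow_lead by auto using ps_pow_order. reflexivity.
Qed.

Lemma ps_monom_0_0 (p q : ps) (n : nat) : ps_monom p q 0 0 n = ps_one n.
Proof. apply ps_mul_one_r. Qed.

Lemma ps_monom_1_0 (p q : ps) (n : nat) : ps_monom p q 1 0 n = p n.
Proof. unfold ps_monom. simpl. rewrite !ps_mul_one_r. reflexivity. Qed.

Lemma ps_monom_0_1 (p q : ps) (n : nat) : ps_monom p q 0 1 n = q n.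
Proof. unfold ps_monom. simpl. rewrite ps_mul_one_l, ps_mul_one_r. reflexivity. Qed.

Lemma ps_monom_2_0 (p q : ps) (n : nat) : ps_monom p q 2 0 n = ps_mul p p n.
Proof.
  unfold ps_monom. simpl. rewrite ps_mul_one_r.
  apply ps_mul_ext; intros; [reflexivity | apply ps_mul_one_r].
Qed.

Lemma ps_monom_1_1 (p q : ps) (n : nat) : ps_monom p q 1 1 n = ps_mul p q n.
Proof. unfold ps_monom. simpl. apply ps_mul_ext; intros; apply ps_mul_one_r. Qed.

Lemma ps_monom_0_2 (p q : ps) (n : nat) : ps_monom p q 0 2 n = ps_mul q q n.
Proof.
  unfold ps_monom. simpl. rewrite ps_mul_one_l.
  apply ps_mul_ext; intros; [reflexivity | apply ps_mul_one_r].
Qed.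

Lemma ps_monom_sub (X Y X' Y' : ps) (u d : nat) :
  ps_order_ge X u -> ps_order_ge X' u -> ps_order_ge Y u -> ps_order_ge Y' u ->
  X u = X' u -> Y u = Y' u ->
  ps_order_ge (ps_sub X X') (d + u) -> ps_order_ge (ps_sub Y Y') (d + u) ->
  forall i j,
  ps_order_ge (ps_sub (ps_monom X Y i j) (ps_monom X' Y' i j)) (d + i * u + j * u)
  /\ ps_sub (ps_monom X Y i j) (ps_monom X' Y' i j) (d + i * u + j * u)%nat
     = INR i * X u ^ (i - 1) * ps_sub X X' (d + u)%nat * Y u ^ j
       + X u ^ i * (INR j * Y u ^ (j - 1) * ps_sub Y Y' (d + u)%nat).
Proof.
  intros HX HX' HY HY' HXu HYu HdX HdY i j.
  destruct (ps_pow_sub X X' u d HX HX' HXu HdX i) as [HXo HXc].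
  destruct (ps_pow_sub Y Y' u d HY HY' HYu HdY j) as [HYo HYc].
  assert (Hsplit : forall n, ps_sub (ps_monom X Y i j) (ps_monom X' Y' i j) n
     = ps_mul (ps_sub (ps_pow X i) (ps_pow X' i)) (ps_pow Y j) n
       + ps_mul (ps_pow X' i) (ps_sub (ps_pow Y j) (ps_pow Y' j)) n)
    by (intros n; apply ps_mul_sub).
  split.
  - intros n Hn. rewrite Hsplit.
    rewrite (ps_mul_order _ _ (d + i * u) (j * u)), (ps_mul_order _ _ (i * u) (d + j * u));
      try lia; try ring; auto using ps_pow_order.
  - rewrite Hsplit.
    replace (d + i * u + j * u)%nat with (d + i * u + j * u)%nat at 1 by lia.
    rewrite ps_mul_lead by auto using ps_pow_order.
    replace (d + i * u + j * u)%nat with (i * u + (d + j * u))%nat by lia.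
    rewrite ps_mul_lead, HXc, HYc, !ps_pow_lead, <- HXu by auto using ps_pow_order.
    ring.
Qed.

Lemma ps_mul_sub_coef (A B A' B' : ps) (d : nat) :
  ps_order_ge A 2 -> ps_order_ge A' 2 -> ps_order_ge B 2 -> ps_order_ge B' 2 ->
  ps_order_ge (ps_sub A A') (d + 2) -> ps_order_ge (ps_sub B B') (d + 2) ->
  ps_mul A B (d + 6)%nat - ps_mul A' B' (d + 6)%nat
  = (ps_sub A A' (d + 2)%nat * ps_add B B' 4%nat + ps_sub A A' (d + 3)%nat * ps_add B B' 3%nat
     + ps_sub A A' (d + 4)%nat * ps_add B B' 2%nat
     + ps_add A A' 2%nat * ps_sub B B' (d + 4)%nat + ps_add A A' 3%nat * ps_sub B B' (d + 3)%nat
     + ps_add A A' 4%nat * ps_sub B B' (d + 2)%nat) / 2.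
Proof.
  intros HA HA' HB HB' HdA HdB. apply (Rmult_eq_reg_l 2); [|discrR].
  rewrite ps_mul_sub_sym.
  replace (d + 6)%nat with (d + 2 + 2 + 2)%nat at 1 by lia.
  rewrite (ps_mul_shift2 (ps_sub A A') (ps_add B B') (d + 2) 2) by auto using ps_add_order.
  replace (d + 6)%nat with (2 + (d + 2) + 2)%nat by lia.
  rewrite (ps_mul_shift2 (ps_add A A') (ps_sub B B') 2 (d + 2)) by auto using ps_add_order.
  replace (d + 2 + 1)%nat with (d + 3)%nat by lia. replace (d + 2 + 2)%nat with (d + 4)%nat by lia.
  simpl Nat.add. field.
Qed.

(** * Composition of bivariate series with series of order at least two *)

Definition tri_sum (G : nat -> nat -> R) (N : nat) : R :=
  sum_f_R0 (fun i => sum_f_R0 (fun j => G i j) (N - i)) N.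

Lemma comp_ps_tri_sum (A : bps) (p q : ps) (N : nat) :
  comp_ps A p q N = tri_sum (fun i j => A i j * ps_monom p q i j N) N.
Proof. reflexivity. Qed.

Lemma tri_sum_ext (G G' : nat -> nat -> R) (N : nat) :
  (forall i j, G i j = G' i j) -> tri_sum G N = tri_sum G' N.
Proof. intros HG. unfold tri_sum. apply sum_eq; intros; apply sum_eq; intros; apply HG. Qed.

Lemma tri_sum_sub (G G' : nat -> nat -> R) (N : nat) :
  tri_sum G N - tri_sum G' N = tri_sum (fun i j => G i j - G' i j) N.
Proof. unfold tri_sum. rewrite <- minus_sum. apply sum_eq. intros. symmetry. apply minus_sum. Qed.

Lemma tri_sum_succ (G : nat -> nat -> R) (N : nat) :
  (forall i j, (N < i + j)%nat -> G i j = 0) -> tri_sum G (S N) = tri_sum G N.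
Proof.
  intros HG. unfold tri_sum. rewrite tech5, Nat.sub_diag.
  change (sum_f_R0 (fun j => G (S N) j) 0) with (G (S N) 0%nat).
  rewrite (HG (S N) 0%nat), Rplus_0_r by lia.
  apply sum_eq. intros i Hi. replace (S N - i)%nat with (S (N - i)) by lia.
  rewrite tech5, HG by lia. ring.
Qed.

Lemma tri_sum_trunc (G : nat -> nat -> R) (K N : nat) :
  (forall i j, (K < i + j)%nat -> G i j = 0) -> (K <= N)%nat -> tri_sum G N = tri_sum G K.
Proof.
  intros HG HKN. induction N as [|N IH].
  - replace K with 0%nat by lia. reflexivity.
  - destruct (Nat.eq_dec K (S N)) as [->|HK]; [reflexivity|].
    rewrite tri_sum_succ by (intros; apply HG; lia). apply IH. lia.
Qed.

Lemma tri_sum_min (G : nat -> nat -> R) (K N : nat) :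
  (forall i j, (Nat.min K N < i + j)%nat -> G i j = 0) -> tri_sum G N = tri_sum G K.
Proof.
  intros HG. rewrite (tri_sum_trunc G (Nat.min K N) N), (tri_sum_trunc G (Nat.min K N) K)
    by (assumption || lia). reflexivity.
Qed.

Lemma comp_ps_low (A : bps) (p q : ps) (M : nat) :
  ps_order_ge p 2 -> ps_order_ge q 2 -> (M <= 3)%nat ->
  comp_ps A p q M = A 0%nat 0%nat * ps_one M + A 1%nat 0%nat * p M + A 0%nat 1%nat * q M.
Proof.
  intros Hp Hq HM. rewrite comp_ps_tri_sum, (tri_sum_min _ 1 M).
  - unfold tri_sum. cbn [sum_f_R0 Nat.sub].
    rewrite ps_monom_0_0, ps_monom_1_0, ps_monom_0_1. ring.
  - intros i j Hij. rewrite (ps_monom_order p q 2 2 i j Hp Hq) by lia. ring.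
Qed.

Lemma comp_ps_cubic (A : bps) (X Y : ps) (N : nat) :
  ps_order_ge X 2 -> ps_order_ge Y 2 -> (N <= 7)%nat ->
  comp_ps A X Y N =
    A 0%nat 0%nat * ps_one N + A 1%nat 0%nat * X N + A 0%nat 1%nat * Y N
    + A 2%nat 0%nat * ps_mul X X N + A 1%nat 1%nat * ps_mul X Y N + A 0%nat 2%nat * ps_mul Y Y N
    + A 3%nat 0%nat * ps_monom X Y 3 0 N + A 2%nat 1%nat * ps_monom X Y 2 1 N
    + A 1%nat 2%nat * ps_monom X Y 1 2 N + A 0%nat 3%nat * ps_monom X Y 0 3 N.
Proof.
  intros HX HY HN. rewrite comp_ps_tri_sum, (tri_sum_min _ 3 N).
  - unfold tri_sum. cbn [sum_f_R0 Nat.sub].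
    rewrite ps_monom_0_0, ps_monom_1_0, ps_monom_0_1, ps_monom_2_0, ps_monom_1_1, ps_monom_0_2.
    ring.
  - intros i j Hij. rewrite (ps_monom_order X Y 2 2 i j HX HY) by lia. ring.
Qed.

Lemma comp_ps_sub_l (A : bps) (p p' q : ps) (d M : nat) :
  ps_order_ge p 2 -> ps_order_ge p' 2 -> ps_order_ge q 2 -> p 2%nat = p' 2%nat ->
  ps_order_ge (ps_sub p p') (d + 2) -> (M < d + 4)%nat ->
  comp_ps A p q M - comp_ps A p' q M = A 1%nat 0%nat * (p M - p' M).
Proof.
  intros Hp Hp' Hq H2 Hd HM. rewrite !comp_ps_tri_sum, tri_sum_sub.
  assert (Hvanish : forall i j, (i = 0 \/ 1 < i + j \/ M < i + j)%nat ->
     A i j * ps_monom p q i j M - A i j * ps_monom p' q i j M = 0).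
  { intros i j Hij. destruct i as [|i].
    - unfold ps_monom. change (ps_pow p 0) with ps_one. change (ps_pow p' 0) with ps_one. ring.
    - rewrite <- Rmult_minus_distr_l. unfold ps_monom. rewrite <- ps_mul_sub_l.
      destruct (ps_pow_sub p p' 2 d Hp Hp' H2 Hd (S i)) as [Hpow _].
      rewrite (ps_mul_order _ _ (d + S i * 2) (j * 2) Hpow (ps_pow_order _ _ _ Hq)) by lia.
      ring. }
  rewrite (tri_sum_min _ 1 M) by (intros; apply Hvanish; lia).
  unfold tri_sum. cbn [sum_f_R0 Nat.sub].
  rewrite (Hvanish 0%nat 0%nat), (Hvanish 0%nat 1%nat), !ps_monom_1_0 by lia. ring.
Qed.

(** * Solving order by order *)

Definition ps_set (a : ps) (k : nat) (x : R) : ps := fun n => if (n =? k)%nat then x else a n.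

Section RecursiveRoot.

Variables (E : ps -> ps) (c Dc : R).

Hypothesis E_low : forall h, ps_order_ge h 2 -> h 2%nat = c ->
  forall N, (N <= 6)%nat -> E h N = 0.

Hypothesis E_sub : forall h h' d, ps_order_ge h 2 -> ps_order_ge h' 2 ->
  h 2%nat = c -> h' 2%nat = c -> ps_order_ge (ps_sub h h') (d + 2) ->
  E h (d + 6)%nat - E h' (d + 6)%nat = Dc * (h (d + 2)%nat - h' (d + 2)%nat).

Hypothesis Dc_neq0 : Dc <> 0.

(* Step [m] corrects coefficient [m+3] by a Newton step, which kills coefficient [m+7] of [E];
   later steps leave the coefficients below [m+4] untouched. *)
Fixpoint approx (m : nat) : ps :=
  match m with
  | O => fun n => if (n =? 2)%nat then c else 0
  | S m' => ps_set (approx m') (m' + 3)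
              (approx m' (m' + 3)%nat - E (approx m') (m' + 7)%nat / Dc)
  end.

Lemma approx_stable (m m' k : nat) : (m <= m')%nat -> (k < m + 3)%nat -> approx m' k = approx m k.
Proof.
  intros Hm Hk. induction m' as [|m' IH].
  - replace m with 0%nat by lia. reflexivity.
  - destruct (Nat.eq_dec m (S m')) as [->|Hne]; [reflexivity|].
    simpl. unfold ps_set. destruct (Nat.eqb_spec k (m' + 3)); [lia|]. apply IH. lia.
Qed.

Lemma approx_low (m : nat) : approx m 0%nat = 0 /\ approx m 1%nat = 0 /\ approx m 2%nat = c.
Proof. rewrite !(approx_stable 0 m) by lia. auto. Qed.

Lemma approx_order (m : nat) : ps_order_ge (approx m) 2.
Proof. intros [|[|i]] Hi; [apply approx_low | apply approx_low | lia]. Qed.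

Lemma approx_root_step (m : nat) : E (approx (S m)) (m + 7)%nat = 0.
Proof.
  destruct (approx_low m) as [_ [_ Hm2]]. destruct (approx_low (S m)) as [_ [_ HSm2]].
  assert (Hagree : ps_order_ge (ps_sub (approx (S m)) (approx m)) (S m + 2)).
  { intros i Hi. unfold ps_sub. rewrite (approx_stable m (S m)) by lia. ring. }
  pose proof (E_sub _ _ (S m) (approx_order _) (approx_order _) HSm2 Hm2 Hagree) as Hlin.
  replace (S m + 6)%nat with (m + 7)%nat in Hlin by lia.
  replace (S m + 2)%nat with (m + 3)%nat in Hlin by lia.
  assert (Hcoef : approx (S m) (m + 3)%nat
                  = approx m (m + 3)%nat - E (approx m) (m + 7)%nat / Dc)
    by (simpl; unfold ps_set; rewrite Nat.eqb_refl; reflexivity).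
  rewrite Hcoef in Hlin.
  replace (Dc * (approx m (m + 3)%nat - E (approx m) (m + 7)%nat / Dc - approx m (m + 3)%nat))
    with (- E (approx m) (m + 7)%nat) in Hlin by (field; assumption).
  lra.
Qed.

Lemma recursive_root : exists h : ps, h 0%nat = 0 /\ h 1%nat = 0 /\ forall n, E h n = 0.
Proof.
  set (h := fun n => approx n n).
  assert (Hh : forall m k, (k < m + 3)%nat -> h k = approx m k).
  { intros m k Hk. unfold h. destruct (Nat.le_gt_cases k m).
    - symmetry. apply approx_stable; lia.
    - apply approx_stable; lia. }
  destruct (approx_low 0) as [H0 [H1 H2]].
  rewrite <- !(Hh 0%nat) in H0, H1, H2 by lia.
  assert (Ho : ps_order_ge h 2) by (intros [|[|i]] Hi; [assumption | assumption | lia]).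
  exists h. split; [assumption|]. split; [assumption|]. intros n.
  destruct (Nat.le_gt_cases n 6) as [Hn|Hn]; [apply E_low; assumption|].
  assert (exists m, n = (m + 7)%nat) as [m ->] by (exists (n - 7)%nat; lia).
  destruct (approx_low (S m)) as [_ [_ Ha2]].
  assert (Hagree : ps_order_ge (ps_sub h (approx (S m))) (S m + 2)).
  { intros i Hi. unfold ps_sub. rewrite (Hh (S m)) by lia. ring. }
  pose proof (E_sub _ _ (S m) Ho (approx_order _) H2 Ha2 Hagree) as Hlin.
  rewrite (Hh (S m) (S m + 2)%nat) in Hlin by lia.
  replace (S m + 6)%nat with (m + 7)%nat in Hlin by lia.
  rewrite approx_root_step in Hlin. lra.
Qed.

End RecursiveRoot.

Lemma real_cube_root (a : R) : exists c, c ^ 3 = a.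
Proof.
  assert (Hpos : forall b, 0 < b -> Rpower b (/ 3) ^ 3 = b).
  { intros b Hb. rewrite <- Rpower_pow by (unfold Rpower; apply exp_pos).
    rewrite Rpower_mult. replace (/ 3 * INR 3) with 1 by (simpl; field). apply Rpower_1, Hb. }
  destruct (Rtotal_order a 0) as [Ha|[->|Ha]].
  - exists (- Rpower (- a) (/ 3)).
    replace ((- Rpower (- a) (/ 3)) ^ 3) with (- Rpower (- a) (/ 3) ^ 3) by ring.
    rewrite Hpos by lra. ring.
  - exists 0. ring.
  - exists (Rpower a (/ 3)). apply Hpos, Ha.
Qed.

Lemma taylor2_0_0 (g : R -> R -> R) (a b : R) : taylor2 g a b 0%nat 0%nat = g a b.
Proof. unfold taylor2, pd. cbn [fact INR Derive_n]. field. Qed.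

Definition t3 : ps := fun n => if (n =? 3)%nat then 1 else 0.

Lemma t3_order : ps_order_ge t3 2.
Proof. intros [|[|i]] Hi; reflexivity || lia. Qed.

(** * The energy along [t |-> K(h(t), t^3)] *)

Section EnergyAlongCurve.

Variables (Om : R -> R -> R) (x0 y0 : R) (K : nat -> bps).

Local Notation Oxx := (pd Om 2 0 x0 y0).
Local Notation Oxy := (pd Om 1 1 x0 y0).
Local Notation Oyy := (pd Om 0 2 x0 y0).
Local Notation Oxxx := (pd Om 3 0 x0 y0).
Local Notation Oxxy := (pd Om 2 1 x0 y0).
Local Notation Oxyy := (pd Om 1 2 x0 y0).
Local Notation Oyyy := (pd Om 0 3 x0 y0).
Local Notation Ecal := (Oxxx * Oyy ^ 3 - 3 * Oxxy * Oyy ^ 2 * Oxy + 3 * Oxyy * Oyy * Oxy ^ 2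
                        - Oyyy * Oxy ^ 3).
Local Notation C := (Cmat Oxx Oxy Oyy).
Local Notation TO := (taylor2 Om x0 y0).

Hypothesis crit_x : pd Om 1 0 x0 y0 = 0.
Hypothesis crit_y : pd Om 0 1 x0 y0 = 0.
Hypothesis hess_degenerate : Oxx * Oyy = Oxy ^ 2.
Hypothesis Oyy_neq0 : Oyy <> 0.

Hypothesis K0_00 : K 0%nat 0%nat 0%nat = 0.
Hypothesis K0_10 : K 0%nat 1%nat 0%nat = 1.
Hypothesis K0_01 : K 0%nat 0%nat 1%nat = 0.
Hypothesis K1_00 : K 1%nat 0%nat 0%nat = 0.
Hypothesis K1_10 : K 1%nat 1%nat 0%nat = 0.
Hypothesis K1_01 : K 1%nat 0%nat 1%nat = 1.
Hypothesis Kh_linear : forall i n m : nat, (i = 2 \/ i = 3)%nat -> (n + m <= 1)%nat -> K i n m = 0.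

Lemma Oxx_eq : Oxx = Oxy ^ 2 / Oyy.
Proof. rewrite <- hess_degenerate. field. exact Oyy_neq0. Qed.

Definition curve_disp (h : ps) : nat -> ps := mv_ps C (fun i => comp_ps (K i) h t3).

Definition curve_energy (h : ps) : ps := energy_formal TO (Om x0 y0) (curve_disp h).

Lemma curve_disp_low (h : ps) (k M : nat) : ps_order_ge h 2 -> (M <= 3)%nat ->
  curve_disp h k M = C k 0%nat * h M + C k 1%nat * t3 M.
Proof.
  intros Hh HM. unfold curve_disp, mv_ps. cbn [sum_f_R0].
  rewrite !comp_ps_low by auto using t3_order.
  rewrite K0_00, K0_10, K0_01, K1_00, K1_10, K1_01, !Kh_linear by lia. ring.
Qed.

Lemma curve_disp_order (h : ps) (k : nat) : ps_order_ge h 2 -> ps_order_ge (curve_disp h k) 2.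
Proof.
  intros Hh i Hi. rewrite curve_disp_low, Hh by (assumption || lia).
  destruct i as [|[|]]; [..|lia]; unfold t3; simpl; ring.
Qed.

(* The velocity components of [v0] vanish. *)
Lemma curve_disp_vel_order (h : ps) (k : nat) : ps_order_ge h 2 -> (k = 1 \/ k = 3)%nat ->
  ps_order_ge (curve_disp h k) 3.
Proof.
  intros Hh Hk i Hi. rewrite curve_disp_low by (assumption || lia).
  destruct Hk as [-> | ->]; (destruct i as [|[|[|]]]; [..|lia]); unfold t3; simpl; ring.
Qed.

Lemma curve_disp_coef2 (h : ps) (k : nat) : ps_order_ge h 2 ->
  curve_disp h k 2%nat = C k 0%nat * h 2%nat.
Proof. intros Hh. rewrite curve_disp_low by (assumption || lia). unfold t3; simpl; ring. Qed.

Lemma curve_disp_coef3 (h : ps) (k : nat) : ps_order_ge h 2 ->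
  curve_disp h k 3%nat = C k 0%nat * h 3%nat + C k 1%nat.
Proof. intros Hh. rewrite curve_disp_low by (assumption || lia). unfold t3; simpl; ring. Qed.

Lemma curve_disp_sub (h h' : ps) (d k M : nat) :
  ps_order_ge h 2 -> ps_order_ge h' 2 -> h 2%nat = h' 2%nat ->
  ps_order_ge (ps_sub h h') (d + 2) -> (M < d + 4)%nat ->
  curve_disp h k M - curve_disp h' k M = C k 0%nat * (h M - h' M).
Proof.
  intros Hh Hh' H2 Hd HM.
  assert (Hj : forall j, comp_ps (K j) h t3 M
                         = comp_ps (K j) h' t3 M + K j 1%nat 0%nat * (h M - h' M)).
  { intros j. rewrite <- (comp_ps_sub_l (K j) h h' t3 d M);
      auto using t3_order. ring. }
  unfold curve_disp, mv_ps. cbn [sum_f_R0].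
  rewrite !Hj, K0_10, K1_10, !Kh_linear by lia. ring.
Qed.

Lemma taylor_cubic (X Y : ps) (N : nat) :
  ps_order_ge X 2 -> ps_order_ge Y 2 -> (N <= 7)%nat ->
  comp_ps TO X Y N =
    Om x0 y0 * ps_one N + Oxx / 2 * ps_mul X X N + Oxy * ps_mul X Y N + Oyy / 2 * ps_mul Y Y N
    + Oxxx / 6 * ps_monom X Y 3 0 N + Oxxy / 2 * ps_monom X Y 2 1 N
    + Oxyy / 2 * ps_monom X Y 1 2 N + Oyyy / 6 * ps_monom X Y 0 3 N.
Proof.
  intros HX HY HN. rewrite comp_ps_cubic, taylor2_0_0 by assumption.
  unfold taylor2. rewrite crit_x, crit_y. cbn [fact Nat.mul Nat.add INR]. field.
Qed.

Lemma curve_energy_expand (h : ps) (N : nat) : ps_order_ge h 2 -> (N <= 7)%nat ->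
  curve_energy h N =
    - (ps_mul (curve_disp h 1) (curve_disp h 1) N + ps_mul (curve_disp h 3) (curve_disp h 3) N)
    + Oxx * ps_mul (curve_disp h 0) (curve_disp h 0) N
    + 2 * Oxy * ps_mul (curve_disp h 0) (curve_disp h 2) N
    + Oyy * ps_mul (curve_disp h 2) (curve_disp h 2) N
    + Oxxx / 3 * ps_monom (curve_disp h 0) (curve_disp h 2) 3 0 N
    + Oxxy * ps_monom (curve_disp h 0) (curve_disp h 2) 2 1 N
    + Oxyy * ps_monom (curve_disp h 0) (curve_disp h 2) 1 2 N
    + Oyyy / 3 * ps_monom (curve_disp h 0) (curve_disp h 2) 0 3 N.
Proof.
  intros Hh HN. unfold curve_energy, energy_formal.
  rewrite taylor_cubic by auto using curve_disp_order.
  unfold ps_one. destruct (N =? 0)%nat; field.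
Qed.

(* At orders 4 and 5 the quadratic part only pairs [(X_2, Y_2) = h_2 (Oyy, -Oxy)],
   which spans the kernel of the degenerate Hessian, with another coefficient. *)
Lemma curve_energy_below6 (h : ps) (N : nat) : ps_order_ge h 2 -> (N < 6)%nat ->
  curve_energy h N = 0.
Proof.
  intros Hh HN.
  pose proof (curve_disp_order h 0 Hh) as HX. pose proof (curve_disp_order h 2 Hh) as HY.
  pose proof (curve_disp_vel_order h 1 Hh ltac:(lia)) as HV1.
  pose proof (curve_disp_vel_order h 3 Hh ltac:(lia)) as HV3.
  rewrite curve_energy_expand by (assumption || lia).
  rewrite (ps_mul_order _ _ 3 3 HV1 HV1), (ps_mul_order _ _ 3 3 HV3 HV3) by lia.
  rewrite !(ps_monom_order _ _ 2 2 _ _ HX HY) by lia.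
  assert (N < 4 \/ N = 4 \/ N = 5)%nat as [HN4 | [-> | ->]] by lia.
  - rewrite !(ps_mul_order _ _ 2 2) by (assumption || lia). ring.
  - assert (Hlead : forall a b, ps_order_ge a 2 -> ps_order_ge b 2 ->
              ps_mul a b 4%nat = a 2%nat * b 2%nat)
      by (intros a b Ha Hb; exact (ps_mul_lead a b 2 2 Ha Hb)).
    rewrite !Hlead by assumption.
    rewrite !curve_disp_coef2 by assumption. cbn [Cmat]. rewrite Oxx_eq. field. exact Oyy_neq0.
  - assert (Hshift : forall a b, ps_order_ge a 2 -> ps_order_ge b 2 ->
              ps_mul a b 5%nat = a 2%nat * b 3%nat + a 3%nat * b 2%nat)
      by (intros a b Ha Hb; exact (ps_mul_shift a b 2 2 1 Ha Hb)).
    rewrite !Hshift by assumption.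
    rewrite !curve_disp_coef2, !curve_disp_coef3 by assumption. cbn [Cmat].
    rewrite Oxx_eq. field. exact Oyy_neq0.
Qed.

Lemma curve_energy_6 (h : ps) : ps_order_ge h 2 ->
  curve_energy h 6%nat = Oyy * (4 - Oxx - Oyy) + Ecal / 3 * h 2%nat ^ 3.
Proof.
  intros Hh.
  pose proof (curve_disp_order h 0 Hh) as HX. pose proof (curve_disp_order h 2 Hh) as HY.
  pose proof (curve_disp_vel_order h 1 Hh ltac:(lia)) as HV1.
  pose proof (curve_disp_vel_order h 3 Hh ltac:(lia)) as HV3.
  rewrite curve_energy_expand by (assumption || lia).
  assert (Hkin : forall a, ps_order_ge a 3 -> ps_mul a a 6%nat = a 3%nat * a 3%nat)
    by (intros a Ha; exact (ps_mul_lead a a 3 3 Ha Ha)).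
  assert (Hquad : forall a b, ps_order_ge a 2 -> ps_order_ge b 2 ->
            ps_mul a b 6%nat = a 2%nat * b 4%nat + a 3%nat * b 3%nat + a 4%nat * b 2%nat)
    by (intros a b Ha Hb; exact (ps_mul_shift2 a b 2 2 Ha Hb)).
  rewrite (Hkin _ HV1), (Hkin _ HV3), !Hquad by assumption.
  assert (Hcub : forall i j, (i + j = 3)%nat ->
    ps_monom (curve_disp h 0) (curve_disp h 2) i j 6%nat
    = curve_disp h 0 2%nat ^ i * curve_disp h 2 2%nat ^ j).
  { intros i j Hij. replace 6%nat with (i * 2 + j * 2)%nat by lia.
    apply ps_monom_lead; assumption. }
  rewrite !Hcub by reflexivity.
  rewrite !curve_disp_coef2, !curve_disp_coef3 by assumption. cbn [Cmat].
  rewrite Oxx_eq. field. exact Oyy_neq0.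
Qed.

(* Each quadratic term pairs a vector along the kernel [(Oyy, -Oxy)] of the Hessian
   with another one and contributes nothing; the cubic terms give the result. *)
Lemma taylor_comp_sub (X Y X' Y' : ps) (d : nat) (c dl ep : R) :
  ps_order_ge X 2 -> ps_order_ge X' 2 -> ps_order_ge Y 2 -> ps_order_ge Y' 2 ->
  X 2%nat = Oyy * c -> X' 2%nat = Oyy * c -> Y 2%nat = - Oxy * c -> Y' 2%nat = - Oxy * c ->
  ps_order_ge (ps_sub X X') (d + 2) -> ps_order_ge (ps_sub Y Y') (d + 2) ->
  ps_sub X X' (d + 2)%nat = Oyy * dl -> ps_sub X X' (d + 3)%nat = Oyy * ep ->
  ps_sub Y Y' (d + 2)%nat = - Oxy * dl -> ps_sub Y Y' (d + 3)%nat = - Oxy * ep ->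
  comp_ps TO X Y (d + 6)%nat - comp_ps TO X' Y' (d + 6)%nat = c ^ 2 * Ecal / 2 * dl.
Proof.
  intros HX HX' HY HY' HX2 HX2' HY2 HY2' HdX HdY dX2 dX3 dY2 dY3.
  assert (HXl : X 2%nat = X' 2%nat) by congruence.
  assert (HYl : Y 2%nat = Y' 2%nat) by congruence.
  pose proof (ps_monom_sub X Y X' Y' 2 d HX HX' HY HY' HXl HYl HdX HdY) as Hmon.
  assert (Hcub : forall i j, (i + j = 3)%nat ->
    ps_sub (ps_monom X Y i j) (ps_monom X' Y' i j) (d + 6)%nat
    = INR i * X 2%nat ^ (i - 1) * ps_sub X X' (d + 2)%nat * Y 2%nat ^ j
      + X 2%nat ^ i * (INR j * Y 2%nat ^ (j - 1) * ps_sub Y Y' (d + 2)%nat)).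
  { intros i j Hij. replace (d + 6)%nat with (d + i * 2 + j * 2)%nat by lia. apply Hmon. }
  rewrite !comp_ps_tri_sum, tri_sum_sub.
  rewrite (tri_sum_ext _ (fun i j =>
    TO i j * ps_sub (ps_monom X Y i j) (ps_monom X' Y' i j) (d + 6)%nat))
    by (intros; unfold ps_sub; ring).
  rewrite (tri_sum_min _ 3 (d + 6)).
  2:{ intros i j Hij. destruct (Hmon i j) as [Ho _]. rewrite Ho by lia. ring. }
  unfold tri_sum. cbn [sum_f_R0 Nat.sub].
  rewrite (Hcub 3%nat 0%nat), (Hcub 2%nat 1%nat), (Hcub 1%nat 2%nat), (Hcub 0%nat 3%nat),
    dX2, dY2 by reflexivity.
  unfold ps_sub.
  rewrite !ps_monom_0_0, !ps_monom_1_0, !ps_monom_0_1, !ps_monom_2_0, !ps_monom_1_1,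
    !ps_monom_0_2.
  rewrite (ps_mul_sub_coef X X X' X' d), (ps_mul_sub_coef X Y X' Y' d),
    (ps_mul_sub_coef Y Y Y' Y' d) by assumption.
  rewrite dX2, dX3, dY2, dY3. unfold ps_add.
  rewrite HX2, HX2', HY2, HY2', taylor2_0_0.
  unfold taylor2. rewrite crit_x, crit_y. cbn [fact Nat.mul Nat.add INR Nat.sub pow].
  rewrite Oxx_eq. field. exact Oyy_neq0.
Qed.

Lemma curve_energy_sub (h h' : ps) (d : nat) :
  ps_order_ge h 2 -> ps_order_ge h' 2 -> h 2%nat = h' 2%nat ->
  ps_order_ge (ps_sub h h') (d + 2) ->
  curve_energy h (d + 6)%nat - curve_energy h' (d + 6)%nat
  = h 2%nat ^ 2 * Ecal * (h (d + 2)%nat - h' (d + 2)%nat).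
Proof.
  intros Hh Hh' H2 Hd.
  assert (Hdisp : forall k M, (M < d + 4)%nat ->
    ps_sub (curve_disp h k) (curve_disp h' k) M = C k 0%nat * (h M - h' M))
    by (intros k M HM; apply (curve_disp_sub h h' d); assumption).
  assert (Hdisp_order : forall k, ps_order_ge (ps_sub (curve_disp h k) (curve_disp h' k)) (d + 2)).
  { intros k i Hi. rewrite Hdisp by lia. specialize (Hd i Hi). unfold ps_sub in Hd.
    rewrite Hd. ring. }
  assert (Hkin : forall k, (k = 1 \/ k = 3)%nat ->
    ps_mul (curve_disp h k) (curve_disp h k) (d + 6)%nat
    = ps_mul (curve_disp h' k) (curve_disp h' k) (d + 6)%nat).
  { intros k Hk. apply Rminus_diag_uniq. rewrite ps_mul_sub.
    assert (Hvel : ps_order_ge (ps_sub (curve_disp h k) (curve_disp h' k)) (d + 4)).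
    { intros i Hi. rewrite Hdisp by exact Hi. destruct Hk as [-> | ->]; cbn [Cmat]; ring. }
    rewrite (ps_mul_order _ _ (d + 4) 3 Hvel (curve_disp_vel_order h k Hh Hk)),
      (ps_mul_order _ _ 3 (d + 4) (curve_disp_vel_order h' k Hh' Hk) Hvel) by lia.
    ring. }
  assert (Hcomp : comp_ps TO (curve_disp h 0) (curve_disp h 2) (d + 6)%nat
                  - comp_ps TO (curve_disp h' 0) (curve_disp h' 2) (d + 6)%nat
                  = h 2%nat ^ 2 * Ecal / 2 * (h (d + 2)%nat - h' (d + 2)%nat)).
  { apply taylor_comp_sub with (ep := h (d + 3)%nat - h' (d + 3)%nat);
      auto using curve_disp_order.
    all: try (rewrite curve_disp_coef2 by assumption; cbn [Cmat]; rewrite ?H2; ring).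
    all: rewrite Hdisp by lia; cbn [Cmat]; ring. }
  unfold curve_energy, energy_formal. rewrite (Hkin 1%nat), (Hkin 3%nat) by lia.
  transitivity (2 * (comp_ps TO (curve_disp h 0) (curve_disp h 2) (d + 6)%nat
                     - comp_ps TO (curve_disp h' 0) (curve_disp h' 2) (d + 6)%nat)).
  - ring.
  - rewrite Hcomp. field.
Qed.

Lemma curve_energy_root : Oxx + Oyy > 4 -> Ecal <> 0 ->
  exists h1 : ps, h1 0%nat = 0 /\ h1 1%nat = 0 /\ forall n, curve_energy h1 n = 0.
Proof.
  intros Htr HE.
  destruct (real_cube_root (- 3 * Oyy * (4 - Oxx - Oyy) / Ecal)) as [c Hc].
  assert (Hc0 : c <> 0).
  { intros ->. assert (Hz : - 3 * Oyy * (4 - Oxx - Oyy) = 0).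
    { replace (- 3 * Oyy * (4 - Oxx - Oyy))
        with (- 3 * Oyy * (4 - Oxx - Oyy) / Ecal * Ecal) by (field; exact HE).
      rewrite <- Hc. ring. }
    destruct (Rmult_integral _ _ Hz) as [Hz1 | Hz1]; [|lra].
    destruct (Rmult_integral _ _ Hz1) as [Hz2 | Hz2]; [lra | exact (Oyy_neq0 Hz2)]. }
  apply (recursive_root curve_energy c (c ^ 2 * Ecal)).
  - intros h Hh H2 N HN. destruct (Nat.eq_dec N 6) as [->|HN6].
    + rewrite curve_energy_6, H2, Hc by assumption. field. exact HE.
    + apply curve_energy_below6; (assumption || lia).
  - intros h h' d Hh Hh' H2 H2' Hd.
    rewrite curve_energy_sub, H2 by (assumption || congruence). reflexivity.
  - apply Rmult_integral_contrapositive_currified; [apply pow_nonzero|]; assumption.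
Qed.

End EnergyAlongCurve.

Theorem lemma2
  (m1 m2 m3 x1 y1 x2 y2 x3 y3 x0 y0 : R)
  (hm : m1 + m2 + m3 = 1) (hm3 : 0 < m3) (hm32 : m3 <= m2) (hm21 : m2 <= m1)
  (hp1 : (x0, y0) <> (x1, y1)) (hp2 : (x0, y0) <> (x2, y2))
  (hp3 : (x0, y0) <> (x3, y3)) :
  let Om := Omega m1 m2 m3 x1 y1 x2 y2 x3 y3 in
  let Oxx := pd Om 2 0 x0 y0 in
  let Oxy := pd Om 1 1 x0 y0 in
  let Oyy := pd Om 0 2 x0 y0 in
  let C := Cmat Oxx Oxy Oyy in
  pd Om 1 0 x0 y0 = 0 -> pd Om 0 1 x0 y0 = 0 ->
  Oxx * Oyy = Oxy ^ 2 ->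
  Oyy <> 0 -> Oxx + Oyy > 4 ->
  forall (Ci : nat -> nat -> R),
  (* Ci is the inverse matrix of C *)
  (forall i k : nat, (i < 4)%nat -> (k < 4)%nat ->
     sum_f_R0 (fun j => Ci i j * C j k) 3 = if Nat.eqb i k then 1 else 0) ->
  forall (K r : nat -> bps),
  (* K_c(x,y) = (x,y) + O(2), K_h = O(2) *)
  K 0%nat 0%nat 0%nat = 0 -> K 0%nat 1%nat 0%nat = 1 -> K 0%nat 0%nat 1%nat = 0 ->
  K 1%nat 0%nat 0%nat = 0 -> K 1%nat 1%nat 0%nat = 0 -> K 1%nat 0%nat 1%nat = 1 ->
  (forall i n m : nat, (i = 2 \/ i = 3)%nat -> (n + m <= 1)%nat -> K i n m = 0) ->
  (* r(x,y) = (y,0) + O(2) *)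
  r 0%nat 0%nat 0%nat = 0 -> r 0%nat 1%nat 0%nat = 0 -> r 0%nat 0%nat 1%nat = 1 ->
  (forall n m : nat, (n + m <= 1)%nat -> r 1%nat n m = 0) ->
  (* DK r = F o K formally, F(x) = C^{-1} f(C x + L_c) *)
  (forall i n m : nat, (i < 4)%nat ->
     bps_add (bps_mul (bps_dx (K i)) (r 0%nat))
             (bps_mul (bps_dy (K i)) (r 1%nat)) n m
     = mv_bps Ci (f_formal (taylor2 (dxfun Om) x0 y0) (taylor2 (dyfun Om) x0 y0)
                           (mv_bps C K)) i n m) ->
  let Oxxx := pd Om 3 0 x0 y0 in
  let Oxxy := pd Om 2 1 x0 y0 in
  let Oxyy := pd Om 1 2 x0 y0 in
  let Oyyy := pd Om 0 3 x0 y0 in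
  Oxxx * Oyy ^ 3 - 3 * Oxxy * Oyy ^ 2 * Oxy + 3 * Oxyy * Oyy * Oxy ^ 2
    - Oyyy * Oxy ^ 3 <> 0 ->
  exists h1 : ps,
    h1 0%nat = 0 /\ h1 1%nat = 0 /\
    let h2 : ps := fun n => if Nat.eqb n 3 then 1 else 0 in
    let Kh : nat -> ps := fun i => comp_ps (K i) h1 h2 in
    forall n : nat,
      energy_formal (taylor2 Om x0 y0) (Om x0 y0) (mv_ps C Kh) n = 0.
Proof.
  intros Om Oxx Oxy Oyy C crit_x crit_y Hdeg Hyy Htr Ci _ K r
    K0_00 K0_10 K0_01 K1_00 K1_10 K1_01 Kh_lin _ _ _ _ _ Oxxx Oxxy Oxyy Oyyy HE.
  exact (curve_energy_root Om x0 y0 K crit_x crit_y Hdeg Hyy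
           K0_00 K0_10 K0_01 K1_00 K1_10 K1_01 Kh_lin Htr HE).
Qed.
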